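(* Let $Q$ be a commutative A-loop and for $x\in Q$ let $P_x = L_xL_{x^{-1}}^{-1}$, i.e. $yP_x = x^{-1}\backslash(xy)$. Then for all $x,y\in Q$, $P_xP_yP_x = P_{yP_x}$ (maps composed left to right). In particular, $P_Q=\{P_x : x\in Q\}$ is a twisted subgroup of $\mathrm{Mlt}(Q)$.
   Context: A loop is a set with a binary operation and neutral element $1$ in which all left translations $L_x:y\mapsto xy$ and right translations $y\mapsto yx$ are bijections; $\mathrm{Mlt}(Q)$ is the group they generate and $\mathrm{Inn}(Q)$ the stabilizer of $1$ in it. A commutative A-loop is a commutative loop all of whose inner mappings are automorphisms. Maps act on the right: $yL_x=xy$, and $y(\alpha\beta)=(y\alpha)\beta$. $x\backslash y$ is the unique $z$ with $xz=y$; $x^{-1}=x\backslash 1$. A twisted subgroup of a group $G$ is a subset $T\subseteq G$ with $1\in T$, $a^{-1}\in T$ for $a\in T$, and $aba\in T$ for $a,b\in T$. *)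

Set Implicit Arguments.

(* A loop: a set with a binary operation and neutral element 1 in which all
   left and right translations are bijections.  The bijectivity is expressed
   equationally through the (unique) left and right divisions:
   ldiv x y = x\y (the unique z with x z = y), rdiv y x = y/x (unique z with z x = y). *)
Record loop := Loop {
  carrier :> Type;
  mul : carrier -> carrier -> carrier;
  one : carrier;
  ldiv : carrier -> carrier -> carrier;
  rdiv : carrier -> carrier -> carrier;
  mul1q : forall x, mul one x = x;
  mulq1 : forall x, mul x one = x;
  ldivK : forall x y, ldiv x (mul x y) = y;
  mulK_ldiv : forall x y, mul x (ldiv x y) = y;
  rdivK : forall x y, rdiv (mul y x) x = y;
  mulK_rdiv : forall x y, mul (rdiv y x) x = y
}.

Arguments mul {l}.
Arguments one {l}.
Arguments ldiv {l}.
Arguments rdiv {l}.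

Section LoopDefs.
Variable Q : loop.

(* Maps act on the right: y L_x = x y, y R_x = y x.  We represent a map
   alpha as a function, so y alpha = alpha y and y (alpha beta) = beta (alpha y). *)
Definition Lt (x : Q) : Q -> Q := fun y => mul x y.
Definition Rt (x : Q) : Q -> Q := fun y => mul y x.

(* Mlt(Q): the group generated by all left and right translations; it is the
   closure of the identity under composition with translations and their inverses. *)
Inductive mlt : (Q -> Q) -> Prop :=
  | mlt_id : mlt (fun y => y)
  | mlt_L x f : mlt f -> mlt (fun y => Lt x (f y))
  | mlt_Linv x f : mlt f -> mlt (fun y => ldiv x (f y))
  | mlt_R x f : mlt f -> mlt (fun y => Rt x (f y))
  | mlt_Rinv x f : mlt f -> mlt (fun y => rdiv (f y) x).

Definition inner_map (f : Q -> Q) : Prop := mlt f /\ f one = one.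

Definition commutative_loop : Prop := forall x y : Q, mul x y = mul y x.

(* Every inner mapping is an automorphism (it is already a bijection,
   being in Mlt(Q); it remains to be multiplicative). *)
Definition A_loop : Prop :=
  forall f, inner_map f -> forall x y : Q, f (mul x y) = mul (f x) (f y).

Definition commutative_A_loop : Prop := commutative_loop /\ A_loop.

Definition linv (x : Q) : Q := ldiv x one.

Definition P (x : Q) : Q -> Q := fun y => ldiv (linv x) (mul x y).

Definition P_set (f : Q -> Q) : Prop := exists x : Q, f = P x.

Definition twisted_subgroup_of_mlt (T : (Q -> Q) -> Prop) : Prop :=
  (forall a, T a -> mlt a) /\
  T (fun y => y) /\
  (forall a, T a -> exists b, T b /\ (forall y, b (a y) = y) /\ (forall y, a (b y) = y)) /\
  (forall a b, T a -> T b -> T (fun y => a (b (a y)))).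

End LoopDefs.
Arguments Lt {Q}.
Arguments Rt {Q}.
Arguments mlt {Q}.
Arguments inner_map {Q}.
Arguments linv {Q}.
Arguments P {Q}.
Arguments P_set {Q}.
Arguments twisted_subgroup_of_mlt {Q}.

(* In a commutative A-loop every inner mapping is an automorphism, hence also
   preserves two-sided inverses; applied to a suitable inner mapping this yields
   the automorphic inverse property (xy)^-1 = x^-1 y^-1.  For c = yP_x the map
   u : v |-> c (P_{x^-1} (y\v)) is an inner mapping with c w = (y (wP_x))u;
   conjugating by inverses gives c^-1 w = (y^-1 (wP_x^-1))u as well, and these
   two formulas combine to c^-1 (z P_x P_y P_x) = c z, i.e. P_c = P_x P_y P_x. *)

From Stdlib Require Import FunctionalExtensionality Setoid.
Set Implicit Arguments.

Arguments mul1q {l}.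
Arguments mulq1 {l}.
Arguments ldivK {l}.
Arguments mulK_ldiv {l}.

Section Loop.
Variable Q : loop.

Lemma mulqI (a b c : Q) : mul a b = mul a c -> b = c.
Proof. intro H. rewrite <- (ldivK a b), <- (ldivK a c), H. reflexivity. Qed.

Lemma ldiv_eq (a b c : Q) : mul a c = b -> ldiv a b = c.
Proof. intro H. rewrite <- H. apply ldivK. Qed.

Lemma mulq_linv (x : Q) : mul x (linv x) = one.
Proof. apply mulK_ldiv. Qed.

Lemma ldivqq (x : Q) : ldiv x x = one.
Proof. apply ldiv_eq, mulq1. Qed.

Lemma linv1 : linv (one : Q) = one.
Proof. apply ldivqq. Qed.

Lemma P_mlt (x : Q) : mlt (P x).
Proof. exact (mlt_Linv (linv x) (mlt_L x (mlt_id Q))). Qed.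

Lemma P1 (z : Q) : P one z = z.
Proof. unfold P. rewrite linv1, mul1q. apply ldiv_eq, mul1q. Qed.

End Loop.

Section CommutativeLoop.
Variable Q : loop.
Hypothesis HC : commutative_loop Q.

Lemma mul_linvq (x : Q) : mul (linv x) x = one.
Proof. rewrite HC. apply mulq_linv. Qed.

Lemma linvK (x : Q) : linv (linv x) = x.
Proof. apply ldiv_eq, mul_linvq. Qed.

Lemma P_linvK (x y : Q) : P (linv x) (P x y) = y.
Proof. unfold P. rewrite linvK, mulK_ldiv. apply ldivK. Qed.

Lemma P_linvKV (x y : Q) : P x (P (linv x) y) = y.
Proof. rewrite <- (linvK x) at 1. apply P_linvK. Qed.

End CommutativeLoop.

Section CommutativeALoop.
Variable Q : loop.
Hypothesis HC : commutative_loop Q.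
Hypothesis HA : A_loop Q.

Lemma inner_map_linv (f : Q -> Q) (z : Q) :
  inner_map f -> f (linv z) = linv (f z).
Proof.
  intros Hf. symmetry. apply ldiv_eq.
  rewrite <- (HA Hf), mulq_linv. apply Hf.
Qed.

(* The automorphic inverse property, witnessed by the inner mapping
   h : z |-> t\(s(y^-1 z)) with s = xy and t = y^-1 s, which sends x to t. *)
Lemma linvM (x y : Q) : linv (mul x y) = mul (linv x) (linv y).
Proof.
  set (s := mul x y). set (t := mul (linv y) s).
  set (h := fun z => ldiv t (mul s (mul (linv y) z))).
  assert (Hh : inner_map h).
  { split.
    - exact (mlt_Linv t (mlt_L s (mlt_L (linv y) (mlt_id Q)))).
    - unfold h. rewrite mulq1, HC. apply ldivqq. }
  assert (hy : h y = ldiv t s).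
  { unfold h. rewrite mul_linvq, mulq1 by exact HC. reflexivity. }
  assert (hs : h s = s).
  { unfold h. fold t. rewrite HC. apply ldivK. }
  assert (hx : h x = t).
  { apply (@mulqI _ (ldiv t s)).
    rewrite (HC _ (h x)), <- hy, <- (HA Hh), hy. fold s. rewrite hs, HC.
    symmetry. apply mulK_ldiv. }
  assert (h_linvx : h (linv x) = linv t).
  { rewrite (inner_map_linv _ Hh), hx. reflexivity. }
  apply ldiv_eq. rewrite (HC (linv x)).
  rewrite <- (mulK_ldiv t (mul s (mul (linv y) (linv x)))).
  change (mul t (h (linv x)) = one). rewrite h_linvx. apply mulq_linv.
Qed.

Lemma linv_ldiv (a b : Q) : linv (ldiv a b) = ldiv (linv a) (linv b).
Proof. symmetry. apply ldiv_eq. rewrite <- linvM, mulK_ldiv. reflexivity. Qed.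

Lemma linv_P (x y : Q) : linv (P x y) = P (linv x) (linv y).
Proof. unfold P at 1 2. rewrite linv_ldiv, linvM, linvK by exact HC. reflexivity. Qed.

Section Sandwich.
Variables x y : Q.

Let c := P x y.
Let u (v : Q) : Q := mul c (P (linv x) (ldiv y v)).

Lemma sandwich_inner : inner_map u.
Proof.
  split.
  - exact (mlt_L c (mlt_Linv (linv (linv x)) (mlt_L (linv x) (mlt_Linv y (mlt_id Q))))).
  - unfold u. fold (linv y). rewrite <- linv_P. apply mulq_linv.
Qed.

Lemma mul_sandwich (w : Q) : mul c w = u (mul y (P x w)).
Proof. unfold u. rewrite ldivK, P_linvK by exact HC. reflexivity. Qed.

Lemma mul_linv_sandwich (w : Q) : mul (linv c) w = u (mul (linv y) (P (linv x) w)).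
Proof.
  rewrite <- (linvK HC w) at 1.
  rewrite <- linvM, mul_sandwich, <- (inner_map_linv _ sandwich_inner).
  rewrite linvM, linv_P, !linvK by exact HC. reflexivity.
Qed.

Lemma P_sandwich (z : Q) : P x (P y (P x z)) = P c z.
Proof.
  symmetry. apply ldiv_eq.
  rewrite mul_linv_sandwich, P_linvK by exact HC.
  unfold P at 1. rewrite mulK_ldiv. symmetry. apply mul_sandwich.
Qed.

End Sandwich.

End CommutativeALoop.

Theorem lemma3p3 (Q : loop) (HQ : commutative_A_loop Q) :
  (forall x y z : Q, P x (P y (P x z)) = P (P x y) z) /\
  twisted_subgroup_of_mlt (@P_set Q).
Proof.
  destruct HQ as [HC HA].
  split; [| split; [| split; [| split]]].
  - intros x y z. apply P_sandwich; assumption.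
  - intros f [x ->]. apply P_mlt.
  - exists one. apply functional_extensionality. intro z. symmetry. apply P1.
  - intros f [x ->]. exists (P (linv x)).
    split; [exists (linv x); reflexivity |].
    split; intro y; [apply P_linvK | apply P_linvKV]; exact HC.
  - intros f g [x ->] [y ->]. exists (P x y).
    apply functional_extensionality. intro z. apply P_sandwich; assumption.
Qed.
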